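(* Let $d,n\in\mathbb{N}$, $\mathbb{Z}_+=\{0,1,\ldots\}$, $\|x\|_\infty=\max_i|x_i|$, $x\sim y$ iff $|x-y|=1$ (Euclidean norm). Define $u_n:\mathbb{Z}_+^d\to\mathbb{R}$ by $u_n(x)=1$ if $\|x\|_\infty\le n$ and $u_n(x)=0$ otherwise. Then for $t>0$ and $0<p<\infty$, \[\sum_{j\in\mathbb{Z}_+^d\setminus\{0\}}\frac{|u_n(j)|^p}{\|j\|_\infty^t}\ge\begin{cases}\frac{d}{d-t}n^{d-t},&\text{if }d-t\ge1,\\ \frac{d}{|d-t|}\,|(n+1)^{d-t}-1|,&\text{if }d-t<1,\ d-t\ne0,\\ d\ln(n+1),&\text{if }d-t=0,\end{cases}\] and \[\sum_{x\in\mathbb{Z}_+^d}\ \sum_{\substack{y\in\mathbb{Z}_+^d\\ y\sim x}}|u_n(x)-u_n(y)|^p\le\begin{cases}2dn^{d-1}+2^{d+1}dn^{d-2},&\text{if }d\ge2,\\ 2dn^{d-1},&\text{if }d=1.\end{cases}\] *)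

From HB Require Import structures.
From mathcomp Require Import all_boot all_order all_algebra.
From mathcomp Require Import all_classical all_reals all_analysis.
Set Implicit Arguments. Unset Strict Implicit. Unset Printing Implicit Defensive.
Import Order.TTheory GRing.Theory Num.Theory.
Local Open Scope ring_scope.

Definition pt (d : nat) := {ffun 'I_d -> nat}.

(* ||x||_oo = max_i |x_i| (coordinates are nonnegative). *)
Definition normInf (d : nat) (x : pt d) : nat := (\max_(i < d) x i)%N.

Definition eucl_dist (R : realType) (d : nat) (x y : pt d) : R :=
  Num.sqrt (\sum_(i < d) ((x i)%:R - (y i)%:R) ^+ 2).

Definition adj (R : realType) (d : nat) (x y : pt d) : Prop :=
  eucl_dist R x y = 1.

Definition u_ (R : realType) (d n : nat) (x : pt d) : R :=
  if (normInf x <= n)%N then 1 else 0.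

(* Both sums only see the cube [0, n]^d on which u_n = 1.

   In the first one, group the points j <> 0 of the cube by m = ||j||_oo:
   there are (m + 1)^d - m^d >= d m^(d-1) of them, so the sum is at least
   d * sum_(m=1..n) m^(s-1) with s = d - t.  By the mean value theorem, m^(s-1)
   dominates the increment of x^s / s over [m-1, m] when s >= 1 and over [m, m+1]
   when s < 1, while 1/m dominates that of ln x over [m, m+1]; the three lower
   bounds follow by telescoping.

   In the second one, the neighbours of x are the points x +- e_i, and
   |u_n(x) - u_n(y)| vanishes unless the step from x to y crosses the boundary
   of the cube.  For each of the 2d steps this happens at (n + 1)^(d-1) points,
   and (n + 1)^(d-1) <= n^(d-1) + 2^d n^(d-2). *)

From HB Require Import structures.
From mathcomp Require Import all_boot all_order all_algebra.
From mathcomp Require Import all_classical all_reals all_analysis.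
From mathcomp Require Import zify ring lra.

Set Implicit Arguments.
Unset Strict Implicit.
Unset Printing Implicit Defensive.

Import Order.TTheory GRing.Theory Num.Theory.

Lemma expSn_ge (k d : nat) : k ^ d.+1 + d.+1 * k ^ d <= k.+1 ^ d.+1.
Proof.
elim: d => [|d IH]; first by rewrite !expn1 !expn0; lia.
rewrite [k ^ d.+2]expnS [k ^ d.+1]expnS [k.+1 ^ d.+2]expnS.
move: IH; rewrite [k ^ d.+1]expnS; nia.
Qed.

Lemma expSn_le (n m : nat) : 0 < n ->
  n.+1 ^ m.+1 + n ^ m <= n ^ m.+1 + 2 ^ m.+1 * n ^ m.
Proof.
move=> n_gt0; elim: m => [|m IH]; first by rewrite !expn1 !expn0; lia.
rewrite [n ^ m.+2]expnS [n.+1 ^ m.+2]expnS [2 ^ m.+2]expnS [n ^ m.+1]expnS.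
move: IH; rewrite [n ^ m.+1]expnS.
set A := n ^ m; set B := n.+1 ^ m.+1; set C := 2 ^ m.+1 => IH.
have C_gt0 : 0 < C by rewrite expn_gt0.
have A_gt0 : 0 < A by rewrite expn_gt0 n_gt0.
have := leq_mul (leqnn n.+1) IH.
have : (C + n) * A <= (C * n + 1) * A by apply: leq_mul => //; nia.
nia.
Qed.

Lemma sum_sqr_eq1 (I : finType) (D : I -> nat) : \sum_i D i ^ 2 = 1 ->
  exists i, D i = 1 /\ forall j, j != i -> D j = 0.
Proof.
move=> S.
have [i Di] : exists i, D i != 0.
  apply/existsP; apply: contraPT S => /existsPn D0.
  by rewrite big1 // => i _; move/negPn: (D0 i) => /eqP ->.
move: S; rewrite (bigD1 i) //= => S.
have Di1 : D i = 1 by move: Di S; set s := (\sum_(j | j != i) _); nia.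
exists i; split => // j ji.
have : \sum_(j | j != i) D j ^ 2 = 0 by move: S; rewrite Di1; lia.
move/eqP; rewrite sum_nat_eq0 => /forallP /(_ j); rewrite ji /=.
by move=> /eqP; lia.
Qed.

Lemma expSn_pred_le (d n : nat) : 0 < n -> 1 < d ->
  2 * d * n.+1 ^ d.-1 <= 2 * d * n ^ d.-1 + 2 ^ d.+1 * d * n ^ (d - 2).
Proof.
case: d => [|[|m]] // n_gt0 _; rewrite /= subn2 /=.
have := leq_mul (leqnn (2 * m.+2)) (expSn_le m n_gt0).
rewrite !expnS; nia.
Qed.

Lemma card_family_prod (aT rT : finType) (F : aT -> pred rT) :
  #|(family F : simpl_pred {ffun aT -> rT})| = \prod_(x : aT) #|F x|.
Proof. by rewrite card_family foldrE big_map enumT. Qed.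

Lemma card_ord_leq (N k : nat) : k < N -> #|[pred v : 'I_N | v <= k]| = k.+1.
Proof.
move=> kN.
rewrite -(size_iota 0 k.+1) -(filter_iota_leq 0 kN) -val_enum_ord filter_map size_map.
by rewrite cardE enumT /enum_mem.
Qed.

Lemma card_bigmax_leq (d N k : nat) : k < N ->
  #|[pred g : {ffun 'I_d -> 'I_N} | \max_(i < d) (g i : nat) <= k]| = k.+1 ^ d.
Proof.
move=> kN.
transitivity #|(family (fun=> [pred v : 'I_N | v <= k]) : simpl_pred {ffun 'I_d -> 'I_N})|.
  apply: eq_card => g; rewrite !inE.
  by apply/bigmax_leqP/familyP => [le_gk i|le_gk i _]; [exact: le_gk | exact: le_gk].
rewrite card_family_prod (eq_bigr (fun=> k.+1)) => [|i _]; last exact: card_ord_leq.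
by rewrite prod_nat_const card_ord.
Qed.

Lemma card_bigmax_eq (d N k : nat) : 0 < k < N ->
  #|[pred g : {ffun 'I_d -> 'I_N} | \max_(i < d) (g i : nat) == k]| + k ^ d = k.+1 ^ d.
Proof.
case: k => [//|k] /= kN.
rewrite -(card_bigmax_leq d kN) -(card_bigmax_leq d (ltnW kN)).
rewrite addnC -[RHS](cardID [pred g : {ffun 'I_d -> 'I_N} | \max_(i < d) (g i : nat) <= k]).
congr (_ + _); apply: eq_card => g; rewrite !inE.
  by lia.
by rewrite -ltnNge andbC eqn_leq.
Qed.

Lemma card_face (d N : nat) (i : 'I_d) (v m : nat) : v < N -> m < N ->
  #|[pred g : {ffun 'I_d -> 'I_N} |
      (g i == v :> nat) && [forall (j | j != i), g j <= m]]| = m.+1 ^ d.-1.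
Proof.
move=> vN mN.
pose F j := if j == i then [pred w : 'I_N | w == v :> nat] else [pred w : 'I_N | w <= m].
transitivity #|(family F : simpl_pred {ffun 'I_d -> 'I_N})|.
  apply: eq_card => g; rewrite !inE; apply/andP/familyP => [[gi /forallP gj] j|gF].
    by rewrite /F; case: eqP => [->|/eqP ji]; rewrite inE //; have := gj j; rewrite ji.
  split; first by have := gF i; rewrite /F eqxx inE.
  by apply/forallP => j; apply/implyP => ji; have := gF j; rewrite /F (negPf ji) inE.
rewrite card_family_prod (bigD1 i) //= /F eqxx.
rewrite (eq_bigr (fun=> m.+1)) => [|j /negPf ->]; last exact: card_ord_leq.
rewrite prod_nat_const cardC1 card_ord -[RHS]mul1n; congr (_ * _).
by rewrite -(card1 (Ordinal vN)); apply: eq_card => w; rewrite !inE.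
Qed.

Lemma card_bigmax_eq_ge (d N k : nat) : 0 < k < N ->
  d.+1 * k ^ d <= #|[pred g : {ffun 'I_d.+1 -> 'I_N} | \max_(i < d.+1) (g i : nat) == k]|.
Proof.
move=> kN; have := card_bigmax_eq d.+1 kN; have := expSn_ge k d; lia.
Qed.

Definition box_pt (d N : nat) (g : {ffun 'I_d -> 'I_N}) : pt d := [ffun i => g i : nat].

Lemma box_pt_inj (d N : nat) : injective (@box_pt d N).
Proof.
by move=> g h /ffunP gh; apply/ffunP => i; apply/val_inj; have := gh i; rewrite !ffunE.
Qed.

Lemma normInf_box_pt (d N : nat) (g : {ffun 'I_d -> 'I_N}) :
  normInf (box_pt g) = \max_(i < d) (g i : nat).
Proof. by apply: eq_bigr => i _; rewrite ffunE. Qed.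

Lemma normInf_leq (d n : nat) (x : pt d) : (normInf x <= n) = [forall i, x i <= n].
Proof. by apply/bigmax_leqP/forallP => le_xn i //; exact: le_xn. Qed.

Lemma forall_leq_split (d n : nat) (x : pt d) (i : 'I_d) :
  [forall j, x j <= n] = (x i <= n) && [forall (j | j != i), x j <= n].
Proof.
apply/forallP/andP => [le_xn|[le_xin /forallP le_xjn] j]; last first.
  by have [->|ji] := eqVneq j i; [|exact: implyP (le_xjn j) ji].
by split; [|apply/forallP => j; apply/implyP].
Qed.

(* Coordinates are truncated at 0, so [step x (i, false) = x] when [x i = 0]. *)
Definition step (d : nat) (x : pt d) (k : 'I_d * bool) : pt d :=
  [ffun j => if j == k.1 then (if k.2 then (x j).+1 else (x j).-1) else x j].

Lemma step_exits_or_enters_box (d n : nat) (x : pt d) (i : 'I_d) (b : bool) :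
  [forall j, x j <= n] != [forall j, step x (i, b) j <= n] ->
  (x i == (if b then n else n.+1)) && [forall (j | j != i), x j <= n].
Proof.
rewrite !(forall_leq_split _ _ i) ffunE eqxx.
have -> : [forall (j | j != i), step x (i, b) j <= n] = [forall (j | j != i), x j <= n].
  by apply: eq_forallb => j; rewrite ffunE; case: eqP.
case: [forall (j | j != i), x j <= n]; rewrite ?andbF // !andbT.
by case: b => /=; do 2!case: leqP => ? //=; lia.
Qed.

Local Open Scope ring_scope.
Local Open Scope classical_set_scope.

Section esum_finite.
Variables (R : realType) (T : choiceType).
Local Open Scope ereal_scope.

Lemma esum_le_sum_cover (I : finType) (e : I -> T) (D : set T) (a : T -> \bar R) :
  (forall x, 0 <= a x) -> (forall x, D x -> a x != 0 -> exists k, e k = x) ->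
  \esum_(x in D) a x <= \sum_(k : I) a (e k).
Proof.
move=> a_ge0 cover.
apply: (@le_trans _ _ (\esum_(x in D) \sum_(k : I) (if e k == x then a x else 0))).
  apply: le_esum => x Dx; have [->|ax_neq0] := eqVneq (a x) 0.
    by apply: sume_ge0 => k _; case: eqP.
  have [k <-] := cover x Dx ax_neq0.
  rewrite (bigD1 k) //= eqxx leeDl //.
  by apply: sume_ge0 => j _; case: eqP.
rewrite esum_sum => [|x k _ _]; last by case: eqP.
apply: lee_sum => k _; rewrite -(esum_set1 (a_ge0 (e k))) esum_mkcond [leRHS]esum_mkcond.
apply: le_esum => x _; have := a_ge0 x.
case: eqVneq => [<-|_]; last by rewrite if_same; case: ifP.
by rewrite in_set1 eqxx; case: ifP.
Qed.

Lemma sum_le_esum_inj (I : finType) (e : I -> T) (P : pred I) (D : set T)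
    (a : T -> \bar R) : injective e -> (forall k, P k -> D (e k)) ->
  \sum_(k | P k) a (e k) <= \esum_(x in D) a x.
Proof.
move=> e_inj PD; apply: esum_ge; exists (e @` [set k | P k]).
  by split; [exact: finite_image finite_finset | move=> _ [k Pk <-]; exact: PD].
rewrite fsbig_image; last by move=> ? ? _ _ /e_inj.
rewrite (fsbigE (enum P)) ?enum_uniq // => [|k|k Pk]; last 2 first.
- by rewrite /= mem_enum.
- by move=> /negP[]; rewrite mem_enum.
rewrite big_enum_cond (eq_bigl P) // => k.
by apply/andP/idP => [[]|Pk] //; split => //; exact/mem_set.
Qed.

End esum_finite.

Section powR_increments.
Variable R : realType.

Lemma powR_MVT (s a b : R) : 0 < a -> a < b ->
  exists2 c, a < c < b & b `^ s - a `^ s = s * c `^ (s - 1) * (b - a).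
Proof.
move=> a_gt0 ab.
have derF x : x \in `]a, b[%R -> is_derive x 1 (@powR R ^~ s) (s * x `^ (s - 1)).
  rewrite in_itv /= => /andP[ax _]; exact: (is_derive1_powR s (lt_trans a_gt0 ax)).
have derivableF : {in `[a, b]%R, forall x, derivable (@powR R ^~ s) x 1}.
  move=> x; rewrite in_itv /= => /andP[ax _].
  by apply: derivable_powR; rewrite in_itv /= andbT (lt_le_trans a_gt0 ax).
have [c cab ->] := MVT ab derF (derivable_within_continuous derivableF).
by exists c => //; move: cab; rewrite in_itv.
Qed.

Lemma powR_sub_ler (s a b : R) : 1 <= s -> 0 <= a -> a < b ->
  b `^ s - a `^ s <= s * b `^ (s - 1) * (b - a).
Proof.
move=> s_ge1 a_ge0 ab; have s_gt0 : 0 < s by exact: lt_le_trans s_ge1.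
have [a0|a_neq0] := eqVneq a 0; last first.
  have a_gt0 : 0 < a by rewrite lt_neqAle eq_sym a_neq0.
  have [c /andP[ac cb] ->] := powR_MVT s a_gt0 ab.
  have c_gt0 : 0 < c := lt_trans a_gt0 ac.
  apply: ler_wpM2r; first by rewrite subr_ge0 ltW.
  apply: ler_wpM2l; first exact: ltW.
  by apply: ge0_ler_powR; rewrite ?nnegrE ?subr_ge0 // ltW // (lt_trans c_gt0).
rewrite a0 in ab *; rewrite powR0 ?gt_eqF // !subr0 -(mulr_powRB1 (ltW ab) s_gt0) mulrC.
by apply: ler_wpM2r; [exact: ltW | rewrite ler_peMl ?powR_ge0].
Qed.

Lemma powR_sub_div_bounds (s a b : R) : s != 0 -> s < 1 -> 0 < a -> a < b ->
  0 <= (b `^ s - a `^ s) / s <= a `^ (s - 1) * (b - a).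
Proof.
move=> s_neq0 s_lt1 a_gt0 ab.
have [c /andP[ac cb] ->] := powR_MVT s a_gt0 ab.
have -> : s * c `^ (s - 1) * (b - a) / s = c `^ (s - 1) * (b - a) by field.
have ba_ge0 : 0 <= b - a by rewrite subr_ge0 ltW.
rewrite mulr_ge0 ?powR_ge0 //=; apply: (ler_wpM2r ba_ge0).
have c_gt0 : 0 < c := lt_trans a_gt0 ac.
rewrite -[s - 1]opprB !powRN lef_pV2 ?posrE ?powR_gt0 //.
by apply: ge0_ler_powR; rewrite ?nnegrE ?subr_ge0 ?ltW.
Qed.

Lemma ln_sub_le (a b : R) : 0 < a -> a <= b -> ln b - ln a <= (b - a) / a.
Proof.
move=> a_gt0 ab; have b_gt0 : 0 < b by exact: lt_le_trans ab.
have -> : ln b - ln a = ln (1 + (b - a) / a).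
  by rewrite -ln_div ?posrE // mulrBl divff ?gt_eqF // addrC subrK.
by apply: le_ln1Dx; rewrite (lt_le_trans (ltrN10 R)) // divr_ge0 ?subr_ge0 // ltW.
Qed.

End powR_increments.

Section power_sums.
Variable R : realType.

Lemma ltr_natSn (k : nat) : k%:R < k.+1%:R :> R.
Proof. by rewrite ltr_nat. Qed.

Lemma sum_powR_pred_ge (n : nat) (s : R) : 1 <= s ->
  n%:R `^ s / s <= \sum_(1 <= k < n.+1) k%:R `^ (s - 1).
Proof.
move=> s_ge1; have s_gt0 : 0 < s by exact: lt_le_trans s_ge1.
rewrite ler_pdivrMr // big_add1 /= mulr_suml.
have := telescope_sumr (fun k => k%:R `^ s : R) (leq0n n).
rewrite powR0 ?gt_eqF // subr0 => <-; apply: ler_sum => k _.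
have := powR_sub_ler s_ge1 (ler0n R k) (ltr_natSn k).
by rewrite -natrB // subSnn mulr1 mulrC.
Qed.

Lemma sum_powR_pred_ge_abs (n : nat) (s : R) : s != 0 -> s < 1 ->
  `|n.+1%:R `^ s - 1| / `|s| <= \sum_(1 <= k < n.+1) k%:R `^ (s - 1).
Proof.
move=> s_neq0 s_lt1.
have incr k : (0 < k)%N ->
    0 <= (k.+1%:R `^ s - k%:R `^ s) / s <= k%:R `^ (s - 1).
  move=> k_gt0; have k_pos : 0 < k%:R :> R by rewrite ltr0n.
  have := powR_sub_div_bounds s_neq0 s_lt1 k_pos (ltr_natSn k).
  by rewrite -natrB // subSnn mulr1.
have tel : (n.+1%:R `^ s - 1) / s = \sum_(1 <= k < n.+1) (k.+1%:R `^ s - k%:R `^ s) / s.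
  by rewrite -mulr_suml telescope_sumr // powR1.
rewrite -normf_div ger0_norm tel; last first.
  by rewrite big_nat_cond sumr_ge0 // => k /andP[/andP[/incr/andP[]]].
by apply: ler_sum_nat => k /andP[/incr/andP[]].
Qed.

Lemma sum_inv_ge_ln (n : nat) : ln n.+1%:R <= \sum_(1 <= k < n.+1) k%:R^-1 :> R.
Proof.
have := telescope_sumr (fun k => ln k%:R : R) (ltn0Sn n).
rewrite /= ln1 subr0 => <-; apply: ler_sum_nat => k /andP[k_gt0 _].
have k_pos : 0 < k%:R :> R by rewrite ltr0n.
have := ln_sub_le k_pos (ltW (ltr_natSn k)).
by rewrite -natrB // subSnn div1r.
Qed.

End power_sums.

Section sup_norm_sum.
Variable R : realType.

Lemma sum_box_inv_max_ge (d n : nat) (t : R) : (0 < d)%N ->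
  d%:R * \sum_(1 <= k < n.+1) k%:R `^ (d%:R - t - 1) <=
  \sum_(g : {ffun 'I_d -> 'I_n.+1} | (0 < \max_(i < d) (g i : nat))%N)
    ((\max_(i < d) (g i : nat))%:R `^ t)^-1.
Proof.
case: d => [//|d] _.
set m := fun g : {ffun 'I_d.+1 -> 'I_n.+1} => \max_(i < d.+1) (g i : nat).
have m_lt g : (m g < n.+1)%N by apply/bigmax_leqP => i _; rewrite -ltnS ltn_ord.
have -> : \sum_(g | (0 < m g)%N) ((m g)%:R `^ t)^-1 =
    \sum_(1 <= k < n.+1) \sum_(g | m g == k) (k%:R `^ t)^-1 :> R.
  under [RHS]eq_bigr do rewrite big_mkcond.
  rewrite exchange_big big_mkcond /=; apply: eq_bigr => g _.
  rewrite -big_mkcond (eq_bigl (pred1 (m g))) => [|k]; last by rewrite /= eq_sym.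
  by rewrite big_nat1_eq m_lt andbT.
rewrite mulr_sumr; apply: ler_sum_nat => k /andP[k_gt0 k_lt].
have k_pos : 0 < k%:R :> R by rewrite ltr0n.
have card_ge : (d.+1 * k ^ d <= #|[pred g | m g == k]|)%N.
  by apply: card_bigmax_eq_ge; rewrite k_gt0.
have -> : d.+1%:R * k%:R `^ (d.+1%:R - t - 1) = (k%:R `^ t)^-1 * (d.+1 * k ^ d)%:R.
  rewrite natrM natrX -powR_mulrn ?ler0n // mulrCA; congr (_ * _).
  rewrite mulrC -powRB ?(gt_eqF k_pos) ?implybT //.
  by congr (_ `^ _); rewrite -natr1; lra.
by rewrite sumr_const -[_ *+ #|_|]mulr_natr ler_pM2l ?invr_gt0 ?powR_gt0 // ler_nat.
Qed.

End sup_norm_sum.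

Lemma sqr_natrB (R : numDomainType) (m n : nat) :
  (m%:R - n%:R) ^+ 2 = (`|m - n|%N ^ 2)%:R :> R.
Proof.
have -> : m%:R - n%:R = (m%:Z - n%:Z)%:~R :> R by rewrite rmorphB.
by rewrite natrX natr_absz intr_norm real_normK ?realz.
Qed.

Lemma adj_step (R : realType) (d : nat) (x y : pt d) : adj R x y -> exists k, y = step x k.
Proof.
rewrite /adj /eucl_dist => /(congr1 (fun r => r ^+ 2)).
rewrite sqr_sqrtr ?expr1n; last by apply: sumr_ge0 => i _; exact: sqr_ge0.
under eq_bigr do rewrite sqr_natrB.
rewrite -natr_sum -[1]/(1%:R : R) => /eqP; rewrite eqr_nat => /eqP.
case/sum_sqr_eq1 => i [dist_i dist_j].
exists (i, (x i < y i)%N); apply/ffunP => j; rewrite ffunE /=.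
have [->|ji] := eqVneq j i; last by apply/esym/eqP; rewrite -distn_eq0 dist_j.
by move/eqP: dist_i; rewrite distn_eq1; case: ltnP => _ /eqP ->.
Qed.

Section u_sums.
Variable R : realType.
Local Open Scope ereal_scope.

Lemma u_step_diff_le (d n : nat) (p : R) (x : pt d) (k : 'I_d * bool) : (0 < p)%R ->
  (`|u_ R n x - u_ R n (step x k)| `^ p <=
    ([forall j, (x j <= n)%N] != [forall j, (step x k j <= n)%N])%:R)%R.
Proof.
move=> p_gt0; rewrite /u_ !normInf_leq.
by do 2!case: ifP => _; rewrite /= ?subrr ?normr0 ?powR0 ?(gt_eqF p_gt0) ?subr0 ?sub0r
  ?normrN ?normr1 ?powR1.
Qed.

Lemma esum_u_step_diff_le (d n : nat) (p : R) (i : 'I_d) (b : bool) : (0 < p)%R ->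
  \esum_(x in [set: pt d]) (`|u_ R n x - u_ R n (step x (i, b))| `^ p)%:E
    <= (n.+1 ^ d.-1)%:R%:E.
Proof.
move=> p_gt0; have [v_lt n_lt] : ((if b then n else n.+1) < n.+2 /\ n < n.+2)%N.
  by case: b.
have diff_le x := u_step_diff_le n x (i, b) p_gt0.
apply: le_trans (esum_le_sum_cover (e := @box_pt d n.+2) _ _) _.
- by move=> x; rewrite lee_fin powR_ge0.
- move=> x _ diff_neq0.
  have : [forall j, (x j <= n)%N] != [forall j, (step x (i, b) j <= n)%N].
    apply: contra diff_neq0 => /eqP eq_in; move: (diff_le x); rewrite eq_in eqxx => diff_le0.
    by rewrite eqe eq_le diff_le0 powR_ge0.
  case/step_exits_or_enters_box/andP => /eqP x_i /forallP x_j.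
  exists [ffun j => inord (x j)]; apply/ffunP => j; rewrite !ffunE inordK //.
  have [->|ji] := eqVneq j i; first by rewrite x_i.
  by have := x_j j; rewrite ji ltnS => /leqW.
rewrite sumEFin lee_fin.
apply: le_trans (ler_sum _ (fun g _ => diff_le (box_pt g))) _.
rewrite -(card_face i v_lt n_lt) -sum1_card natr_sum [leRHS]big_mkcond /=.
apply: ler_sum => g _; rewrite inE.
case: (boolP (_ != _)) => [/step_exits_or_enters_box|_]; last by case: ifP.
rewrite ffunE => /andP[-> /forallP box_j] /=.
suff -> : [forall (j | j != i), (g j <= n)%N] by [].
by apply/forallP => j; have := box_j j; rewrite ffunE.
Qed.

Lemma esum_u_grad_le (d n : nat) (p : R) : (0 < p)%R ->
  \esum_(x in [set: pt d]) \esum_(y in [set y : pt d | adj R x y])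
     (`|u_ R n x - u_ R n y| `^ p)%:E <= (2 * d * n.+1 ^ d.-1)%N%:R%:E.
Proof.
move=> p_gt0.
pose c (x : pt d) k := (`|u_ R n x - u_ R n (step x k)| `^ p)%:E.
have c_ge0 x k : 0 <= c x k by rewrite lee_fin powR_ge0.
apply: (@le_trans _ _ (\esum_(x in [set: pt d]) \sum_(k : 'I_d * bool) c x k)).
  apply: le_esum => x _; apply: esum_le_sum_cover => [y|y /adj_step[k ->] _].
    by rewrite lee_fin powR_ge0.
  by exists k.
rewrite esum_sum => [|x k _ _]; last exact: c_ge0.
apply: (@le_trans _ _ (\sum_(k : 'I_d * bool) (n.+1 ^ d.-1)%:R%:E)).
  by apply: lee_sum => -[i b] _; exact: esum_u_step_diff_le.
rewrite sumEFin lee_fin sumr_const card_prod card_ord card_bool -mulrnA ler_nat.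
by rewrite mulnC [(d * 2)%N]mulnC.
Qed.

Lemma esum_u_normInf_ge (d n : nat) (t p : R) : (0 < d)%N ->
  (d%:R * \sum_(1 <= k < n.+1) k%:R `^ (d%:R - t - 1))%:E <=
  \esum_(j in [set j : pt d | j != [ffun=> 0%N]])
     ((`|u_ R n j| `^ p) / ((normInf j)%:R `^ t))%:E.
Proof.
move=> d_gt0.
have nonzero_box_pt (g : {ffun 'I_d -> 'I_n.+1}) : (0 < \max_(i < d) (g i : nat))%N ->
    [set j : pt d | j != [ffun=> 0%N]] (box_pt g).
  rewrite -normInf_box_pt => max_gt0; apply/eqP => g0; move: max_gt0.
  by rewrite g0 /normInf big1 // => i _; rewrite ffunE.
apply: le_trans _ (sum_le_esum_inj _ (@box_pt_inj d n.+1) nonzero_box_pt).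
rewrite sumEFin lee_fin (le_trans (sum_box_inv_max_ge n t d_gt0)) //.
apply: ler_sum => g _; rewrite /u_ normInf_box_pt ifT ?normr1 ?powR1 ?div1r //.
by apply/bigmax_leqP => i _; rewrite -ltnS.
Qed.

End u_sums.

Theorem proposition3p1 (R : realType) (d n : nat) (t p : R)
  (hd : (1 <= d)%N) (hn : (1 <= n)%N) (ht : 0 < t) (hp : 0 < p) :
  let LHS := \esum_(j in [set j : pt d | j != [ffun=> 0%N]])
               ((`|u_ R n j| `^ p) / ((normInf j)%:R `^ t))%:E in
  let RHS := \esum_(x in [set: pt d])
               \esum_(y in [set y : pt d | adj R x y])
                 (`|u_ R n x - u_ R n y| `^ p)%:E in
  (1 <= d%:R - t ->
     (((d%:R / (d%:R - t)) * (n%:R `^ (d%:R - t)))%R%:E <= LHS)%E) /\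
  (d%:R - t < 1 -> d%:R - t != 0 ->
     (((d%:R / `|d%:R - t|) * `|(n.+1%:R `^ (d%:R - t)) - 1|)%R%:E <= LHS)%E) /\
  (d%:R - t = 0 -> ((d%:R * ln n.+1%:R)%R%:E <= LHS)%E) /\
  ((2 <= d)%N ->
     (RHS <= (2 * d%:R * n%:R ^+ d.-1
              + 2 ^+ d.+1 * d%:R * n%:R ^+ (d - 2))%R%:E)%E) /\
  (d = 1%N -> (RHS <= (2 * d%:R * n%:R ^+ d.-1)%R%:E)%E).
Proof.
move=> LHS RHS.
have lhs : ((d%:R * \sum_(1 <= k < n.+1) k%:R `^ (d%:R - t - 1))%:E <= LHS)%E.
  exact: esum_u_normInf_ge.
have rhs : (RHS <= (2 * d * n.+1 ^ d.-1)%N%:R%:E)%E by exact: esum_u_grad_le.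
have d_gt0 : 0 < d%:R :> R by rewrite ltr0n.
split; [|split; [|split; [|split]]] => [s_ge1|s_lt1 s_neq0|s0|d_ge2|d1].
- apply: le_trans lhs; rewrite lee_fin -mulrA ler_pM2l // mulrC.
  exact: sum_powR_pred_ge.
- apply: le_trans lhs; rewrite lee_fin -mulrA ler_pM2l // mulrC.
  exact: sum_powR_pred_ge_abs.
- apply: le_trans lhs; rewrite lee_fin ler_pM2l // s0.
  under eq_bigr do rewrite sub0r powR_inv1 ?ler0n //.
  exact: sum_inv_ge_ln.
- apply: le_trans rhs _; rewrite lee_fin -!natrX -!natrM -natrD ler_nat.
  exact: expSn_pred_le.
- by apply: le_trans rhs _; rewrite lee_fin d1 /= expn0 expr0 !muln1 !mulr1.
Qed.
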